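(* Let $\mathcal{A}$ be a finite abelian group with $|\mathcal{A}|\ge 3$. Let $M_9(p_1,p_2)$ be the graph consisting of two triangles $v_1v_3v_4$ and $v_1v_5v_6$ sharing the vertex $v_1$, a vertex $v_2$ adjacent to $v_1$, $p_1\ge 0$ pendant vertices adjacent to $v_1$, and $p_2\ge 1$ pendant vertices adjacent to $v_2$. Then $M_9(p_1,p_2)$ is $\mathcal{A}$-vertex magic if and only if $p_1=0$ and there exist distinct elements $g,h\in\mathcal{A}\setminus\{0\}$ with $4(g-h)=0$.
   Context: A map $\ell:V(G)\to\mathcal{A}\setminus\{0\}$ is an $\mathcal{A}$-vertex magic labeling if there is $\mu\in\mathcal{A}$ with $\sum_{u\in N(v)}\ell(u)=\mu$ for every vertex $v$; $G$ is $\mathcal{A}$-vertex magic if such a labeling exists. A pendant vertex has degree $1$. *)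

From HB Require Import structures.
From mathcomp Require Import all_boot all_order all_algebra.
Set Implicit Arguments. Unset Strict Implicit. Unset Printing Implicit Defensive.
Import GRing.Theory.
Local Open Scope ring_scope.

Definition vertex_magic_labeling (A : zmodType) (T : finType) (adj : rel T)
  (l : T -> A) : Prop :=
  (forall v, l v != 0) /\
  exists mu : A, forall v : T, \sum_(u | adj v u) l u = mu.

Definition vertex_magic (A : zmodType) (T : finType) (adj : rel T) : Prop :=
  exists l : T -> A, vertex_magic_labeling adj l.

(* Vertices of M_9(p1,p2): inl (inl i) is v_(i+1) for i < 6,
   inl (inr k) are the p1 pendants at v1, inr k the p2 pendants at v2. *)
Definition M9V (p1 p2 : nat) : finType := ('I_6 + 'I_p1 + 'I_p2)%type.

(* edges among v1..v6 (0-indexed): triangles v1v3v4, v1v5v6, edge v1v2 *)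
Definition M9_base_edges : seq (nat * nat) :=
  [:: (0, 2); (2, 3); (3, 0); (0, 4); (4, 5); (5, 0); (0, 1)]%N.

Definition M9_adj (p1 p2 : nat) : rel (M9V p1 p2) :=
  fun x y =>
  match x, y with
  | inl (inl i), inl (inl j) =>
      ((val i, val j) \in M9_base_edges) || ((val j, val i) \in M9_base_edges)
  | inl (inl i), inl (inr _) => val i == 0%N
  | inl (inr _), inl (inl j) => val j == 0%N
  | inl (inl i), inr _ => val i == 1%N
  | inr _, inl (inl j) => val j == 1%N
  | _, _ => false
  end.

From HB Require Import structures.
From mathcomp Require Import all_boot all_order all_algebra.
Import GRing.Theory.
Local Open Scope ring_scope.

(* In a magic labeling l with constant mu, a pendant vertex sees only its
   neighbour, so every vertex carrying a pendant is labelled mu; in particular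
   l(v2) = mu.  The outer vertices of the two triangles see v1 and their
   partner, so all four are labelled mu - l(v1).  A pendant at v1 would force
   l(v1) = mu and make these labels 0, hence p1 = 0, and the sum around v1
   becomes mu + 4 (mu - l(v1)) = mu: take g = mu and h = l(v1).  Conversely,
   label v1 by h, v2 by g, the triangle vertices by g - h and the pendants at
   v2 by nonzero elements summing to g - h (possible as soon as |A| >= 3); this
   is magic with constant g. *)

Lemma exists_neq2 {T : finType} (x y : T) :
  (2 < #|T|)%N -> exists2 z : T, z != x & z != y.
Proof.
move=> T_gt2; have : (0 < #|[predC [:: x; y]]|)%N.
  rewrite -(ltn_add2l #|[:: x; y]|) cardC addn0.
  exact: leq_ltn_trans (card_size [:: x; y]) T_gt2.
by case/card_gt0P => z; rewrite !inE negb_or => /andP[]; exists z.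
Qed.

Lemma sum_nonzero_decomposition (A : finZmodType) (n : nat) (d : A) :
  (2 < #|A|)%N -> (0 < n)%N -> d != 0 ->
  exists2 f : 'I_n -> A, forall i, f i != 0 & \sum_i f i = d.
Proof.
move=> A_gt2; elim: n d => [|[|n] IHn] d // _ d_neq0.
  by exists (fun=> d); rewrite // big_ord1.
have [a a_neq0 a_neq_d] := exists_neq2 (0 : A) d A_gt2.
have [|f f_neq0 sum_f] := IHn (d - a) isT; first by rewrite subr_eq0 eq_sym.
exists (fun i => if unlift ord0 i is Some j then f j else a).
  by move=> i; case: unlift.
rewrite big_ord_recl unlift_none.
under eq_bigr do rewrite liftK.
by rewrite sum_f addrC subrK.
Qed.

(* 'v_i is the paper's v_(i+1). *)
Notation "''v_' i" := (inl (inl (@Ordinal 6 i%N isT)))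
  (at level 8, i at level 2, format "''v_' i").

Lemma ord0_Ordinal (n : nat) : ord0 = Ordinal (isT : (0 < n.+1)%N).
Proof. exact: val_inj. Qed.

Lemma lift0_Ordinal (n i : nat) (lt_i_n : (i < n)%N) :
  lift (Ordinal (isT : (0 < n.+1)%N)) (Ordinal lt_i_n) = Ordinal (lt_i_n : (i.+1 < n.+1)%N).
Proof. exact: val_inj. Qed.

Section NeighbourhoodSums.
Context {A : zmodType} {p1 p2 : nat} (l : M9V p1 p2 -> A).

Lemma M9_nsum (x : M9V p1 p2) :
  \sum_(u | M9_adj x u) l u =
  \sum_(i < 6) (if M9_adj x (inl (inl i)) then l (inl (inl i)) else 0) +
  \sum_(k < p1) (if M9_adj x (inl (inr k)) then l (inl (inr k)) else 0) +
  \sum_(k < p2) (if M9_adj x (inr k) then l (inr k) else 0).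
Proof. by rewrite big_mkcond /= !big_sumType. Qed.

Ltac nsum_simpl :=
  rewrite M9_nsum !big_ord_recl big_ord0 !ord0_Ordinal ?lift0_Ordinal /=
    ?big1_eq ?addr0 ?add0r ?addrA.

Lemma M9_nsum_pendant1 (k : 'I_p1) : \sum_(u | M9_adj (inl (inr k)) u) l u = l 'v_0.
Proof. by nsum_simpl. Qed.

Lemma M9_nsum_pendant2 (k : 'I_p2) : \sum_(u | M9_adj (inr k) u) l u = l 'v_1.
Proof. by nsum_simpl. Qed.

Lemma M9_nsum_v0 :
  \sum_(u | M9_adj 'v_0 u) l u =
  l 'v_1 + l 'v_2 + l 'v_3 + l 'v_4 + l 'v_5 + \sum_(k < p1) l (inl (inr k)).
Proof. by nsum_simpl. Qed.

Lemma M9_nsum_v1 : \sum_(u | M9_adj 'v_1 u) l u = l 'v_0 + \sum_(k < p2) l (inr k).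
Proof. by nsum_simpl. Qed.

Lemma M9_nsum_v2 : \sum_(u | M9_adj 'v_2 u) l u = l 'v_0 + l 'v_3.
Proof. by nsum_simpl. Qed.

Lemma M9_nsum_v3 : \sum_(u | M9_adj 'v_3 u) l u = l 'v_0 + l 'v_2.
Proof. by nsum_simpl. Qed.

Lemma M9_nsum_v4 : \sum_(u | M9_adj 'v_4 u) l u = l 'v_0 + l 'v_5.
Proof. by nsum_simpl. Qed.

Lemma M9_nsum_v5 : \sum_(u | M9_adj 'v_5 u) l u = l 'v_0 + l 'v_4.
Proof. by nsum_simpl. Qed.

End NeighbourhoodSums.

Section NecessaryCondition.
Variables (A : zmodType) (p1 p2 : nat) (l : M9V p1 p2 -> A) (mu : A).
Hypothesis l_neq0 : forall x, l x != 0.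
Hypothesis l_magic : forall x, \sum_(u | M9_adj x u) l u = mu.

Lemma M9_magic_label_v1 : (0 < p2)%N -> l 'v_1 = mu.
Proof. by move=> p2_gt0; rewrite -(M9_nsum_pendant2 l (Ordinal p2_gt0)) l_magic. Qed.

Lemma M9_magic_triangle_labels :
  [/\ l 'v_2 = mu - l 'v_0, l 'v_3 = mu - l 'v_0,
      l 'v_4 = mu - l 'v_0 & l 'v_5 = mu - l 'v_0].
Proof.
have sub_v0 x : l 'v_0 + l x = mu -> l x = mu - l 'v_0.
  by move<-; rewrite addrC addKr.
by split; apply: sub_v0;
  rewrite -?(M9_nsum_v2 l) -?(M9_nsum_v3 l) -?(M9_nsum_v4 l) -?(M9_nsum_v5 l)
    l_magic.
Qed.

Lemma M9_magic_no_pendant1 : p1 = 0%N.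
Proof.
case: (posnP p1) => // p1_gt0.
have l_v0 : l 'v_0 = mu by rewrite -(M9_nsum_pendant1 l (Ordinal p1_gt0)) l_magic.
have [_ l_v3 _ _] := M9_magic_triangle_labels.
by have := l_neq0 'v_3; rewrite l_v3 l_v0 subrr eqxx.
Qed.

Lemma M9_magic_mul4_eq0 : (0 < p2)%N -> (mu - l 'v_0) *+ 4 = 0.
Proof.
move=> p2_gt0; have [l_v2 l_v3 l_v4 l_v5] := M9_magic_triangle_labels.
have no_pendant1 : \sum_(k < p1) l (inl (inr k)) = 0.
  by rewrite big1 // => k; have := leq_trans (ltn_ord k) (eq_leq M9_magic_no_pendant1).
have := l_magic 'v_0.
rewrite M9_nsum_v0 M9_magic_label_v1 // no_pendant1 addr0 -!addrA.
move=> /(canRL (addKr mu)); rewrite addNr l_v2 l_v3 l_v4 l_v5 => <-.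
by rewrite !mulrS mulr0n addr0.
Qed.

Lemma M9_magic_necessary : (0 < p2)%N ->
  p1 = 0%N /\ exists g h : A, [/\ g != 0, h != 0, g != h & (g - h) *+ 4 = 0].
Proof.
move=> p2_gt0; split; first exact: M9_magic_no_pendant1.
have [_ l_v3 _ _] := M9_magic_triangle_labels.
exists mu, (l 'v_0); split; last exact: M9_magic_mul4_eq0.
- by rewrite -(M9_magic_label_v1 p2_gt0).
- exact: l_neq0.
- by rewrite -subr_eq0 -l_v3.
Qed.

End NecessaryCondition.

Lemma M9_magic_sufficient (A : finZmodType) (p2 : nat) (g h : A) :
  (2 < #|A|)%N -> (0 < p2)%N -> g != 0 -> h != 0 -> g != h -> (g - h) *+ 4 = 0 ->
  vertex_magic A (@M9_adj 0 p2).
Proof.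
move=> A_gt2 p2_gt0 g_neq0 h_neq0 g_neq_h mul4_eq0.
have [f f_neq0 sum_f] : exists2 f : 'I_p2 -> A, forall k, f k != 0 & \sum_k f k = g - h.
  by apply: sum_nonzero_decomposition; rewrite ?subr_eq0.
pose l (x : M9V 0 p2) : A :=
  match x with
  | inl (inl i) => if val i == 0%N then h else if val i == 1%N then g else g - h
  | inl (inr _) => g
  | inr k => f k
  end.
exists l; split.
  by case=> [[i|k]|k] //=; do 2?case: ifP => _ //; rewrite subr_eq0.
exists g; case=> [[[[|[|[|[|[|[|i]]]]]] lt_i_6]|[]]|k] //; last exact: M9_nsum_pendant2.
all: rewrite [lt_i_6](bool_irrelevance _ isT).
- by rewrite M9_nsum_v0 big_ord0 addr0 -[RHS]addr0 -mul4_eq0 !mulrS mulr0n addr0 !addrA.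
- by rewrite M9_nsum_v1 /= sum_f addrC subrK.
- by rewrite M9_nsum_v2 /= addrC subrK.
- by rewrite M9_nsum_v3 /= addrC subrK.
- by rewrite M9_nsum_v4 /= addrC subrK.
- by rewrite M9_nsum_v5 /= addrC subrK.
Qed.

Theorem proposition4p8 (A : finZmodType) (p1 p2 : nat) :
  (2 < #|A|)%N -> (1 <= p2)%N ->
  vertex_magic A (@M9_adj p1 p2) <->
  (p1 = 0%N /\
   exists g h : A, [/\ g != 0, h != 0, g != h & (g - h) *+ 4 = 0]).
Proof.
move=> A_gt2 p2_gt0; split.
  by case=> l [l_neq0 [mu l_magic]]; apply: M9_magic_necessary l_neq0 l_magic p2_gt0.
case=> -> [g [h [g_neq0 h_neq0 g_neq_h mul4_eq0]]];
  exact: (M9_magic_sufficient _ _ g h).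
Qed.
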